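(* Let $\mathcal{K}$ be a family of kernels on $X\times X$, let $\epsilon,\gamma>0$, and let $\mathbf{P}=(P_1,\dots,P_{2n})$ be any probability distributions over $X\times Y$. Then there exists $\tilde{\mathcal{K}}\subset\mathcal{K}$ with $|\tilde{\mathcal{K}}|\leq N_{(D,2n)}(\mathcal{K},\epsilon\gamma/16)$ such that for every $K\in\mathcal{K}$ there exists $\tilde K\in\tilde{\mathcal{K}}$ with \[ er^\gamma_{P_i}(\mathcal{F}_K)+\epsilon/8\geq er^{\gamma/2}_{P_i}(\mathcal{F}_{\tilde{K}})\geq er_{P_i}(\mathcal{F}_K)-\epsilon/8\quad \text{for all } i=1,\dots,2n. \]
   Context: $Y=\{-1,1\}$. A kernel is $K(x,x')=\langle\phi(x),\phi(x')\rangle$ for a map $\phi$ into a Hilbert space; $\mathcal{F}_K=\{x\mapsto\langle w,\phi(x)\rangle:\|w\|\le1\}$. $\llbracket\cdot\rrbracket$ is the indicator. For a distribution $P$ on $X\times Y$: $er_P(\mathcal{F}_K)=\inf_{h\in\mathcal{F}_K}\mathbb{E}_{(x,y)\sim P}\llbracket h(x)y<0\rrbracket$ and $er^\gamma_P(\mathcal{F}_K)=\inf_{h\in\mathcal{F}_K}\mathbb{E}_{(x,y)\sim P}\llbracket h(x)y<\gamma\rrbracket$. With $P_X$ the marginal on $X$, $D_P(K,\tilde K)=\max\{\max_{h\in\mathcal{F}_K}\min_{h'\in\mathcal{F}_{\tilde K}}\mathbb{E}_{x\sim P_X}|h(x)-h'(x)|,\ \max_{h'\in\mathcal{F}_{\tilde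 K}}\min_{h\in\mathcal{F}_K}\mathbb{E}_{x\sim P_X}|h(x)-h'(x)|\}$; for a tuple $\mathbf{Q}=(Q_1,\dots,Q_r)$, $D_{\mathbf{Q}}=\max_i D_{Q_i}$. An $\epsilon$-cover of $\mathcal{K}$ w.r.t. $D_{\mathbf{Q}}$ is a subset $\tilde{\mathcal{K}}\subset\mathcal{K}$ with every $K$ having $\tilde K\in\tilde{\mathcal{K}}$, $D_{\mathbf{Q}}(K,\tilde K)<\epsilon$; $N_{D_{\mathbf{Q}}}(\mathcal{K},\epsilon)$ is its minimal size and $N_{(D,r)}(\mathcal{K},\epsilon)=\max_{(Q_1,\dots,Q_r)}N_{D_{\mathbf{Q}}}(\mathcal{K},\epsilon)$. *)

From HB Require Import structures.
From mathcomp Require Import all_boot all_order all_algebra.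
From mathcomp Require Import finmap all_classical all_reals all_analysis.
Set Implicit Arguments. Unset Strict Implicit. Unset Printing Implicit Defensive.
Import Order.TTheory GRing.Theory Num.Theory.
Local Open Scope classical_set_scope.
Local Open Scope ring_scope.

(* The kernel is K(x,x') = <phi x, phi x'>.  As a standing regularity
   assumption every function x |-> <w, phi x> is measurable (needed so
   that the expectations/probabilities below are meaningful). *)
Record fkernel (R : realType) d (X : measurableType d) := Kernel {
  kspace : Type;
  kzero : kspace;
  kadd : kspace -> kspace -> kspace;
  kopp : kspace -> kspace;
  kscale : R -> kspace -> kspace;
  kaddA : forall u v w, kadd u (kadd v w) = kadd (kadd u v) w;
  kaddC : forall u v, kadd u v = kadd v u;
  kadd0 : forall u, kadd kzero u = u;
  kaddN : forall u, kadd (kopp u) u = kzero;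
  kscaleA : forall a b u, kscale a (kscale b u) = kscale (a * b) u;
  kscale1 : forall u, kscale 1 u = u;
  kscaleDr : forall a u v, kscale a (kadd u v) = kadd (kscale a u) (kscale a v);
  kscaleDl : forall a b u, kscale (a + b) u = kadd (kscale a u) (kscale b u);
  kinner : kspace -> kspace -> R;
  kinner_sym : forall u v, kinner u v = kinner v u;
  kinner_linear : forall a u v w,
    kinner (kadd (kscale a u) v) w = a * kinner u w + kinner v w;
  kinner_ge0 : forall u, 0 <= kinner u u;
  kinner_eq0 : forall u, kinner u u = 0 -> u = kzero;
  kcomplete : forall u : nat -> kspace,
    (forall e : R, 0 < e -> exists N, forall m k, (N <= m)%N -> (N <= k)%N ->
        Num.sqrt (kinner (kadd (u m) (kopp (u k))) (kadd (u m) (kopp (u k)))) < e) ->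
    exists l, forall e : R, 0 < e -> exists N, forall m, (N <= m)%N ->
        Num.sqrt (kinner (kadd (u m) (kopp l)) (kadd (u m) (kopp l))) < e;
  kphi : X -> kspace;
  kphi_meas : forall w, measurable_fun [set: X] (fun x => kinner w (kphi x))
}.

Section Defs.
Context (R : realType) d (X : measurableType d).
Local Notation XY := (X * bool)%type.

Definition kfun (K : fkernel R X) (x x' : X) : R := kinner (kphi K x) (kphi K x').

Definition FK (K : fkernel R X) : set (X -> R) :=
  [set h | exists w : kspace K,
     Num.sqrt (kinner w w) <= 1 /\ h = (fun x => kinner w (kphi K x))].

Definition yval (b : bool) : R := if b then 1 else -1.

Local Open Scope ereal_scope.

Definition er (P : probability XY R) (F : set (X -> R)) : \bar R :=
  ereal_inf [set P [set z | (h z.1 * yval z.2 < 0)%R] | h in F].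

Definition er_margin (gamma : R) (P : probability XY R) (F : set (X -> R)) : \bar R :=
  ereal_inf [set P [set z | (h z.1 * yval z.2 < gamma)%R] | h in F].

Definition marginal (P : probability XY R) : set X -> \bar R :=
  pushforward P fst.

Definition DP (P : probability XY R) (K K' : fkernel R X) : \bar R :=
  let dist := fun h h' : X -> R =>
    \int[marginal P]_x (`|h x - h' x|)%:E in
  maxe (ereal_sup [set ereal_inf [set dist h h' | h' in FK K'] | h in FK K])
       (ereal_sup [set ereal_inf [set dist h h' | h in FK K] | h' in FK K']).

Definition DQ r (Q : 'I_r -> probability XY R) (K K' : fkernel R X) : \bar R :=
  \big[maxe/-oo]_(i < r) DP (Q i) K K'.

Definition is_cover r (Q : 'I_r -> probability XY R) (Kfam Kt : set (fkernel R X))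
  (eps : R) : Prop :=
  Kt `<=` Kfam /\
  forall K, Kfam K -> exists2 K', Kt K' & DQ Q K K' < eps%:E.

(* cardinality as an extended real: the k with A in bijection with {0..k-1},
   or +oo (= inf of the empty set) if A is infinite *)
Definition ecard (T : Type) (A : set T) : \bar R :=
  ereal_inf [set (k%:R)%:E | k in [set k : nat | (A #= `I_k)%card]].

Definition covnum r (Q : 'I_r -> probability XY R) (Kfam : set (fkernel R X))
  (eps : R) : \bar R :=
  ereal_inf [set ecard Kt | Kt in [set Kt | is_cover Q Kfam Kt eps]].

Definition covnum_r (r : nat) (Kfam : set (fkernel R X)) (eps : R) : \bar R :=
  ereal_sup [set covnum Q Kfam eps | Q in [set: 'I_r -> probability XY R]].

End Defs.

From HB Require Import structures.
From mathcomp Require Import all_boot all_order all_algebra.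
From mathcomp Require Import all_classical all_reals all_analysis.
From mathcomp Require Import ring lra.
Import Order.TTheory GRing.Theory Num.Theory.
Local Open Scope classical_set_scope.
Local Open Scope ring_scope.

(* If D_P(K, K') < a then every h in F_K has some h' in F_K' with
   E|h - h'| < a, and conversely.  Wherever h(x)y < s but h'(x)y >= t, the
   two functions differ by at least t - s; with t - s = gamma/2 and
   a = (gamma/2)(eps/8), Markov's inequality shows that this happens with
   probability below eps/8, so margin errors move by at most eps/8 when K is
   replaced by K'.  A minimal (eps gamma/16)-cover of the family for the
   given tuple P therefore works; if no finite cover exists the size bound is
   vacuous and the whole family serves. *)

Section MarginErrorPerturbation.
Context {R : realType} {d : measure_display} {X : measurableType d}.
Implicit Types (P : probability (X * bool)%type R) (K : fkernel R X).

Lemma FK_measurable {K} {h : X -> R} : FK K h -> measurable_fun setT h.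
Proof. by case=> w [_ ->]; exact: kphi_meas. Qed.

Lemma measurable_margin_set (h : X -> R) (a : R) : measurable_fun setT h ->
  measurable [set z : X * bool | h z.1 * yval R z.2 < a].
Proof.
move=> mh; rewrite -[X in measurable X]setTI.
have -> : [set z : X * bool | h z.1 * yval R z.2 < a] =
    (fun z => h z.1 * yval R z.2) @^-1` `]-oo, a[.
  by apply/seteqP; split => z /=; rewrite in_itv.
apply: measurable_realfun.measurable_funM => //.
  exact: measurableT_comp mh measurable_fst.
exact: measurableT_comp measurable_snd.
Qed.

Lemma markov_marginal P {f : X -> R} {a : R} : measurable_fun setT f -> 0 < a ->
  (a%:E * P [set z | (a <= `|f z.1|)%R] <= \int[marginal P]_x (`|f x|)%:E)%E.
Proof.
move=> mf a0.
have -> : [set z : X * bool | (a <= `|f z.1|)%R] =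
    setT `&` [set z | (a%:E <= `|(f z.1)%:E|)%E].
  by apply/seteqP; split => z /=; rewrite lee_fin //; case.
apply: (le_trans (le_integral_comp_abse P measurableT (g := fun z => (f z.1)%:E)
  (@measurable_id _ _ setT) (fun r h => h) (fun x y _ _ h => h) _ a0)).
  by apply/measurable_realfun.measurable_EFinP; exact: measurableT_comp mf measurable_fst.
rewrite /marginal ge0_integral_pushforward //.
by apply/measurable_realfun.measurable_EFinP; exact: measurableT_comp.
Qed.

Lemma margin_gap_le_dist {f g : X -> R} {s t : R} {z : X * bool} :
  f z.1 * yval R z.2 < s -> t <= g z.1 * yval R z.2 -> t - s <= `|g z.1 - f z.1|.
Proof.
have := ler_norm (g z.1 - f z.1); have := ler_norm (f z.1 - g z.1).
by rewrite distrC; case: z.2; rewrite /= ?mulr1 ?mulrN1; lra.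
Qed.

Lemma margin_prob_le_shift P {f g : X -> R} {s t c e : R} :
  measurable_fun setT f -> measurable_fun setT g -> 0 < c -> c <= t - s ->
  (\int[marginal P]_x (`|g x - f x|)%:E < (c * e)%:E)%E ->
  (P [set z | (f z.1 * yval R z.2 < s)%R] <=
     P [set z | (g z.1 * yval R z.2 < t)%R] + e%:E)%E.
Proof.
move=> mf mg c0 cst dist_lt.
have mgf : measurable_fun setT (fun x => g x - f x).
  exact: measurable_realfun.measurable_funB.
set far := [set z : X * bool | c <= `|g z.1 - f z.1|].
have mfar : measurable far.
  rewrite -[X in measurable X]setTI.
  have -> : far = (fun z => `|g z.1 - f z.1|) @^-1` `[c, +oo[.
    by apply/seteqP; split => z /=; rewrite in_itv /= andbT.
  by apply: measurableT_comp => //; exact: measurableT_comp mgf measurable_fst.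
have far_small : (P far <= e%:E)%E.
  apply/ltW; rewrite -(@lte_pmul2l _ c%:E) ?lte_fin // -EFinM.
  exact: le_lt_trans (markov_marginal P mgf c0) dist_lt.
have cover : [set z | f z.1 * yval R z.2 < s] `<=`
    [set z | g z.1 * yval R z.2 < t] `|` far.
  move=> z fz; have [gz|] := ltP (g z.1 * yval R z.2) t; first by left.
  by move=> /(margin_gap_le_dist fz); right; rewrite /far /=; lra.
apply: le_trans (le_measure P _ _ cover) _; rewrite ?inE.
- exact: measurable_margin_set.
- by apply: measurableU => //; exact: measurable_margin_set.
apply: le_trans (measureU2 P _ mfar) _; first exact: measurable_margin_set.
by rewrite leeD2l.
Qed.

Lemma DP_lt_partner P K K' (a : R) : (DP P K K' < a%:E)%E ->
  (forall h, FK K h -> exists2 h', FK K' h' &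
    (\int[marginal P]_x (`|h x - h' x|)%:E < a%:E)%E) /\
  (forall h', FK K' h' -> exists2 h, FK K h &
    (\int[marginal P]_x (`|h' x - h x|)%:E < a%:E)%E).
Proof.
rewrite /DP /= gt_max => /andP[lt_KK' lt_K'K]; split.
- move=> h Kh; have /ereal_inf_lt[_ [h' K'h' <-] ?] : (ereal_inf
      [set \int[marginal P]_x (`|h x - h' x|)%:E | h' in FK K'] < a%:E)%E.
    by apply: le_lt_trans lt_KK'; apply: ereal_sup_ubound; exists h.
  by exists h'.
- move=> h' K'h'; have /ereal_inf_lt[_ [h Kh <-] ?] : (ereal_inf
      [set \int[marginal P]_x (`|h x - h' x|)%:E | h in FK K] < a%:E)%E.
    by apply: le_lt_trans lt_K'K; apply: ereal_sup_ubound; exists h'.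
  by exists h => //; under eq_integral do rewrite distrC.
Qed.

Lemma er_margin_DP_perturb P K K' (gamma eps : R) :
  0 < gamma -> 0 < eps -> (DP P K K' < (eps * gamma / 16)%:E)%E ->
  (er_margin gamma P (FK K) + (eps / 8)%:E >=
     er_margin (gamma / 2) P (FK K'))%E /\
  (er_margin (gamma / 2) P (FK K') >= er P (FK K) - (eps / 8)%:E)%E.
Proof.
move=> gamma0 eps0; have -> : eps * gamma / 16 = gamma / 2 * (eps / 8) by field.
have gamma20 : 0 < gamma / 2 by lra.
move=> /DP_lt_partner[near_K' near_K]; split.
- rewrite -leeBlDr //; apply: le_ereal_inf_tmp => _ [h Kh <-].
  have [h' K'h' dist_lt] := near_K' h Kh.
  rewrite leeBlDr //; apply: le_trans (ereal_inf_lbound _) _; first by exists h'.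
  apply: (margin_prob_le_shift P (FK_measurable K'h') (FK_measurable Kh) gamma20
    _ dist_lt); lra.
- apply: le_ereal_inf_tmp => _ [h' K'h' <-].
  have [h Kh dist_lt] := near_K h' K'h'.
  rewrite leeBlDr //; apply: le_trans (ereal_inf_lbound _) _; first by exists h.
  apply: (margin_prob_le_shift P (FK_measurable Kh) (FK_measurable K'h') gamma20
    _ dist_lt); lra.
Qed.

Lemma DP_self_le0 P K : (DP P K K <= 0)%E.
Proof.
rewrite /DP ge_max; apply/andP; split; apply: ge_ereal_sup => _ [h Kh <-];
  (apply: le_trans (ereal_inf_lbound _) _; first by exists h);
  by under eq_integral do rewrite subrr normr0; rewrite integral0.
Qed.

Lemma DP_le_DQ {r} (Q : 'I_r -> probability (X * bool)%type R) i K K' :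
  (DP (Q i) K K' <= DQ Q K K')%E.
Proof. exact: (@le_bigmax _ _ _ -oo%E (fun i => DP (Q i) K K') i). Qed.

End MarginErrorPerturbation.

Section CoveringNumberAttained.
Context {R : realType}.

Lemma ereal_inf_nat_attained {E : set (\bar R)} :
  E `<=` range (fun k : nat => (k%:R)%:E) `|` [set +oo%E] ->
  ereal_inf E = +oo%E \/ E (ereal_inf E).
Proof.
move=> Enat; have [[k Ek]|noNat] := pselect (exists k : nat, E (k%:R)%:E).
- right; have exk : exists k, `[< E (k%:R)%:E >] by exists k; exact/asboolP.
  case: (ex_minnP exk) => m /asboolP Em m_min.
  suff -> : ereal_inf E = (m%:R)%:E by [].
  apply/le_anti/andP; split; first exact: ereal_inf_lbound.
  apply: le_ereal_inf_tmp => x Ex; case: (Enat x Ex) => [[j _ jx]|->].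
    by rewrite -jx lee_fin ler_nat; apply/m_min/asboolP; rewrite jx.
  exact: leey.
- left; apply/eqP; rewrite eq_le leey /=; apply: le_ereal_inf_tmp => x Ex.
  by case: (Enat x Ex) => [[j _ jx]|->] //; exfalso; apply: noNat; exists j; rewrite jx.
Qed.

Lemma ecard_nat_or_infty (T : Type) (A : set T) :
  (range (fun k : nat => (k%:R)%:E) `|` [set +oo%E]) (ecard R A).
Proof.
have Enat : [set (k%:R)%:E | k in [set k : nat | (A #= `I_k)%card]] `<=`
    range (fun k : nat => (k%:R)%:E) `|` [set +oo%E :> \bar R].
  by move=> _ [k _ <-]; left; exists k.
rewrite /ecard.
by have [->|[k _ <-]] := ereal_inf_nat_attained Enat; [right | left; exists k].
Qed.

Lemma covnum_attained {d} {X : measurableType d} {r}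
    (Q : 'I_r -> probability (X * bool)%type R) (Kfam : set (fkernel R X)) (eps : R) :
  covnum Q Kfam eps = +oo%E \/
  exists2 Kt, is_cover Q Kfam Kt eps & ecard R Kt = covnum Q Kfam eps.
Proof.
have Enat : [set ecard R Kt | Kt in [set Kt | is_cover Q Kfam Kt eps]] `<=`
    range (fun k : nat => (k%:R)%:E) `|` [set +oo%E].
  by move=> _ [Kt _ <-]; exact: ecard_nat_or_infty.
have [|[Kt cover Kt_card]] := ereal_inf_nat_attained Enat.
- by left.
- by right; exists Kt.
Qed.

End CoveringNumberAttained.

Theorem lemma5 (R : realType) (d : measure_display) (X : measurableType d)
  (Kfam : set (fkernel R X)) (eps gamma : R) (n : nat)
  (heps : 0 < eps) (hgamma : 0 < gamma)
  (P : 'I_(2 * n) -> probability (X * bool)%type R) :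
  exists Kt : set (fkernel R X),
    Kt `<=` Kfam /\
    (ecard R Kt <= covnum_r (2 * n) Kfam (eps * gamma / 16))%E /\
    forall K, Kfam K -> exists2 K', Kt K' &
      forall i : 'I_(2 * n),
        (er_margin gamma (P i) (FK K) + (eps / 8)%:E >=
           er_margin (gamma / 2) (P i) (FK K'))%E /\
        (er_margin (gamma / 2) (P i) (FK K') >= er (P i) (FK K) - (eps / 8)%:E)%E.
Proof.
set c := eps * gamma / 16.
have c0 : 0 < c by rewrite /c; apply: divr_gt0 => //; apply: mulr_gt0.
have covnum_le : (covnum P Kfam c <= covnum_r (2 * n) Kfam c)%E.
  by apply: ereal_sup_ubound; exists P.
have [covnum_infty|[Kt [Kt_sub Kt_cover] Kt_card]] := covnum_attained P Kfam c.
- exists Kfam; split => //; split.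
    by move: covnum_le; rewrite covnum_infty leye_eq => /eqP ->; exact: leey.
  move=> K KK; exists K => // i; apply: er_margin_DP_perturb => //.
  by apply: le_lt_trans (DP_self_le0 _ _) _; rewrite lte_fin.
- exists Kt; split => //; split; first by rewrite Kt_card.
  move=> K KK; have [K' K'Kt DQ_lt] := Kt_cover K KK; exists K' => // i.
  apply: er_margin_DP_perturb => //.
  exact: le_lt_trans (DP_le_DQ P i K K') DQ_lt.
Qed.
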